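(* Let $X$ be a $T_0$ space, $F\subseteq X$ and $x\in X$. Then $F\ll_{I_2}x$ if and only if for every net $(x_i)_{i\in I}$ in $X$ that $GSI_2$-converges to $x$ and every open set $U$ of $X$ with $F\subseteq U$, we have $x_i\in U$ eventually.
   Context: For a $T_0$ space $X$, the specialization order is $x\le y$ iff $x\in \mathrm{cl}\{y\}$; $\uparrow A=\{x: a\le x\text{ for some } a\in A\}$, $\uparrow x=\uparrow\{x\}$; $A^\uparrow$, $A^\downarrow$ are the sets of upper and lower bounds of $A$, and $A^\delta=(A^\uparrow)^\downarrow$. A nonempty $A\subseteq X$ is irreducible if whenever $A\subseteq F_1\cup F_2$ with $F_1,F_2$ closed, $A\subseteq F_1$ or $A\subseteq F_2$. $X^{(<\omega)}$ is the set of nonempty finite subsets of $X$. $P_S(X)$ is the set of nonempty compact saturated (upper) subsets of $X$ with the upper Vietoris topology, basis $\{\square U: U\text{ open}\}$, $\square U=\{Q: Q\subseteq U\}$. A net is eventually in $U$ if from some index on all its terms lie in $U$. For $A,B\subseteq X$, $A\ll_{I_2}B$ means: for every irreducible $D\subseteq X$, $D^\delta\cap B\neq\emptyset$ implies $A\cap\mathrm{cl}D\ne\emptyset$; $A\ll_{I_2}x$ means $A\ll_{I_2}\{x\}$. A net $(x_i)_{i\in I}$ $GSI_2$-converges to $x$ if there exists $\mathcal F\subseteq X^{(<\omega)}$ with $\{\uparrow G: G\in\mathcal F\}$ irreducible in $P_S(X)$ such that (i) for every open $U$, if $\uparrow G\subseteq U$ for some $G\in\mathcal F$ then $x_i\in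 U$ eventually, and (ii) $\bigcap_{G\in\mathcal F}\uparrow G\subseteq\uparrow x$. *)

From HB Require Import structures.
From mathcomp Require Import all_boot all_order.
From mathcomp Require Import all_classical.
From mathcomp Require Import topology.

Set Implicit Arguments.
Unset Strict Implicit.
Unset Printing Implicit Defensive.
Local Open Scope classical_set_scope.

Section GSI2.
Variable X : topologicalType.

Definition spec_le (x y : X) : Prop := closure [set y] x.

Definition upset (A : set X) : set X := [set x | exists2 a, A a & spec_le a x].

Definition ubounds (A : set X) : set X := [set u | forall a, A a -> spec_le a u].
Definition lbounds (A : set X) : set X := [set l | forall a, A a -> spec_le l a].
Definition delta (A : set X) : set X := lbounds (ubounds A).

Definition irreducible (A : set X) : Prop :=
  A !=set0 /\ forall F1 F2 : set X, closed F1 -> closed F2 ->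
    A `<=` F1 `|` F2 -> A `<=` F1 \/ A `<=` F2.

Definition llI2 (A B : set X) : Prop :=
  forall D : set X, irreducible D -> delta D `&` B !=set0 -> A `&` closure D !=set0.

Definition fin_nonempty (G : set X) : Prop := finite_set G /\ G !=set0.

Definition saturated (Q : set X) : Prop := upset Q = Q.
Definition PS (Q : set X) : Prop := Q !=set0 /\ compact Q /\ saturated Q.

(* upper Vietoris topology on P_S(X), basis {box U | U open},
   box U = {Q in P_S(X) | Q `<=` U}.  A family W of elements of P_S(X)
   is open iff it is a union of basic sets. *)
Definition box (U : set X) : set (set X) := [set Q | PS Q /\ Q `<=` U].
Definition PS_open (W : set (set X)) : Prop :=
  W `<=` PS /\ forall Q, W Q -> exists U : set X, open U /\ box U Q /\ box U `<=` W.
Definition PS_closed (C : set (set X)) : Prop :=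
  C `<=` PS /\ PS_open (PS `\` C).
Definition PS_irreducible (A : set (set X)) : Prop :=
  A `<=` PS /\ A !=set0 /\
  forall C1 C2, PS_closed C1 -> PS_closed C2 ->
    A `<=` C1 `|` C2 -> A `<=` C1 \/ A `<=` C2.

Definition directed (I : Type) (le : I -> I -> Prop) : Prop :=
  (forall i, le i i) /\ (forall i j k, le i j -> le j k -> le i k) /\
  (exists i : I, True) /\ (forall i j, exists k, le i k /\ le j k).

Definition eventually_in (I : Type) (le : I -> I -> Prop) (net : I -> X) (U : set X) :=
  exists i0, forall i, le i0 i -> U (net i).

Definition GSI2_converges (I : Type) (le : I -> I -> Prop) (net : I -> X) (x : X) :=
  exists Fam : set (set X),
    Fam `<=` fin_nonempty /\
    PS_irreducible [set upset G | G in Fam] /\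
    (forall U : set X, open U -> (exists2 G, Fam G & upset G `<=` U) ->
        eventually_in le net U) /\
    \bigcap_(G in Fam) upset G `<=` upset [set x].

End GSI2.

From mathcomp Require Import all_boot all_order all_classical topology.
Local Open Scope classical_set_scope.
Set Implicit Arguments.
Unset Strict Implicit.

(* Forward: if a net GSI_2-converging to x via the family {G} is not eventually
   in an open U containing F, then no ↑G lies in U, and a Zorn argument on the
   open sets V with no G inside U ∪ V yields a minimal closed set K outside U
   meeting every ↑G.  Irreducibility of {↑G} in P_S(X) makes K irreducible, and
   every upper bound of K lies in the intersection of the ↑G, hence above x, so
   x is in K^δ.  Then F meets cl K = K, contradicting F ⊆ U.
   Backward: for irreducible D and x in D^δ, choose a point of D in each open
   set meeting D; indexed by reverse inclusion this net GSI_2-converges to x via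
   the family of singletons of D, whose image under d ↦ ↑d is irreducible because
   that map is continuous into P_S(X).  If F missed cl D, the net would
   eventually leave cl D although it lies in D. *)

Section SpecializationOrder.
Variable X : topologicalType.
Implicit Types (x y z : X) (A K U : set X).

Lemma spec_le_refl x : spec_le x x.
Proof. exact: subset_closure. Qed.

Lemma nbhs_spec_le U x y : nbhs x U -> spec_le x y -> U y.
Proof. by move=> Ux /(_ U Ux) [_ [-> //]]. Qed.

Lemma open_spec_le U x y : open U -> U x -> spec_le x y -> U y.
Proof. by move=> oU Ux; apply: nbhs_spec_le; apply: open_nbhs_nbhs. Qed.

Lemma closed_spec_le K x y : closed K -> K y -> spec_le x y -> K x.
Proof.
move=> cK Ky xy; apply: contrapT => nKx.
exact: (open_spec_le (closed_openC cK) nKx xy) Ky.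
Qed.

Lemma spec_le_trans y x z : spec_le x y -> spec_le y z -> spec_le x z.
Proof. by move=> xy yz; apply: closed_spec_le (@closed_closure _ _) yz xy. Qed.

Lemma sub_upset A : A `<=` upset A.
Proof. by move=> y Ay; exists y => //; apply: spec_le_refl. Qed.

Lemma upset_spec_le A y z : upset A y -> spec_le y z -> upset A z.
Proof. by move=> [a Aa ay] yz; exists a => //; apply: spec_le_trans yz. Qed.

Lemma upset1E x : upset [set x] = spec_le x.
Proof.
apply/seteqP; split => [y [_ -> //]|y xy].
exact: upset_spec_le (sub_upset (erefl x)) xy.
Qed.

Lemma upset_sub_open A U : open U -> (upset A `<=` U <-> A `<=` U).
Proof.
move=> oU; split=> [AU y /sub_upset/AU //|AU y [a /AU Ua ay]].
exact: open_spec_le Ua ay.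
Qed.

Lemma ubounds_sub_upset A K : upset A `&` K !=set0 -> ubounds K `<=` upset A.
Proof. by move=> [y [Ay Ky]] u uK; apply: upset_spec_le Ay (uK y Ky). Qed.

Lemma deltaP A x : delta A x <-> ubounds A `<=` upset [set x].
Proof. by rewrite upset1E. Qed.

Lemma PS_upset1 x : PS (upset [set x]).
Proof.
split; first by exists x; apply: sub_upset.
split; last first.
  apply/seteqP; split=> [y [z]|]; last exact: sub_upset.
  by rewrite upset1E; apply: spec_le_trans.
move=> P PP Px; exists x; split; first exact: sub_upset.
move=> A B PA Bx; have [y [Ay xy]] := filter_ex (filterI PA Px).
by exists y; split => //; rewrite upset1E in xy; apply: nbhs_spec_le xy.
Qed.

End SpecializationOrder.

Section UpperVietoris.
Variable X : topologicalType.
Implicit Types (x : X) (C D K : set X) (QQ RR : set (set X)).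

Lemma PS_closed_meets K : closed K -> PS_closed [set Q | PS Q /\ Q `&` K !=set0].
Proof.
move=> cK; split=> [Q [] //|]; split=> [Q [] //|Q [PSQ QK]].
exists (~` K); split; first exact: closed_openC.
split; first by split=> // y Qy Ky; apply: QK; split=> //; exists y.
by move=> Q' [PSQ' Q'K]; split=> // -[_ [y [/Q'K]]].
Qed.

Lemma closed_preimage_upset1 RR : PS_closed RR -> closed [set x | RR (upset [set x])].
Proof.
move=> [_ [_ oRR]]; rewrite -openC openE => x /= RRx.
have [U [oU [[_ Ux] URR]]] := oRR _ (conj (PS_upset1 x) RRx).
have {}Ux : U x by apply: Ux; apply: sub_upset.
apply: (@filterS _ _ _ U); last exact: open_nbhs_nbhs.
move=> y Uy; suff /URR[] : box U (upset [set y]) by [].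
by split; [apply: PS_upset1|apply/upset_sub_open => // _ ->].
Qed.

Lemma PS_irreducible_upset1 D : irreducible D -> PS_irreducible [set upset [set d] | d in D].
Proof.
move=> [[d Dd] irrD]; split; first by move=> _ [y _ <-]; apply: PS_upset1.
split; first by exists (upset [set d]); exists d.
move=> C1 C2 cC1 cC2 DC.
have [sub|sub] := irrD _ _ (closed_preimage_upset1 cC1) (closed_preimage_upset1 cC2)
  (fun y Dy => DC _ (ex_intro2 _ _ y Dy erefl)).
- by left=> _ [y /sub Cy <-].
- by right=> _ [y /sub Cy <-].
Qed.

Lemma irreducible_openI D (V W : set X) : irreducible D -> open V -> open W ->
  V `&` D !=set0 -> W `&` D !=set0 -> (V `&` W) `&` D !=set0.
Proof.
move=> [_ irrD] oV oW [y [Vy Dy]] [z [Wz Dz]]; apply: contrapT => nVWD.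
have DVW : D `<=` ~` V `|` ~` W.
  move=> u Du; apply: contrapT => /not_orP[/contrapT Vu /contrapT Wu].
  by apply: nVWD; exists u.
have [DV|DW] := irrD _ _ (open_closedC oV) (open_closedC oW) DVW.
- exact: DV y Dy Vy.
- exact: DW z Dz Wz.
Qed.

Lemma minimal_meeting_closed_irreducible QQ K : PS_irreducible QQ -> closed K ->
  (forall Q, QQ Q -> Q `&` K !=set0) ->
  (forall C, closed C -> C `<=` K -> (forall Q, QQ Q -> Q `&` C !=set0) -> K `<=` C) ->
  irreducible K.
Proof.
move=> [QQ_PS [[Q0 QQ0] irrQQ]] cK meetK minK; split.
  by have [y [_ Ky]] := meetK Q0 QQ0; exists y.
move=> F1 F2 cF1 cF2 KF.
have QQF : QQ `<=` [set Q | PS Q /\ Q `&` (K `&` F1) !=set0] `|`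
                  [set Q | PS Q /\ Q `&` (K `&` F2) !=set0].
  move=> Q QQQ; have [y [Qy Ky]] := meetK Q QQQ.
  by case: (KF y Ky) => Fy; [left|right]; split; by [apply: QQ_PS|exists y].
have meetKF F : closed F -> QQ `<=` [set Q | PS Q /\ Q `&` (K `&` F) !=set0] -> K `<=` F.
  move=> cF QQKF; apply: subset_trans (@subIsetr _ K F).
  by apply: minK; [exact: closedI|exact: subIsetl|move=> Q /QQKF[]].
have [/(meetKF _ cF1)|/(meetKF _ cF2)] := irrQQ _ _ (PS_closed_meets (closedI cK cF1))
  (PS_closed_meets (closedI cK cF2)) QQF; by [left|right].
Qed.

End UpperVietoris.

Lemma finite_sub_chain_cover (T : eqType) (Ch : set (set T)) (B G : set T) :
  total_on Ch subset -> finite_set G -> G `<=` B `|` \bigcup_(V in Ch) V ->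
  G `<=` B \/ exists2 V, Ch V & G `<=` B `|` V.
Proof.
move=> tot /finite_seqP[s ->] {G}; elim: s => [|a s IH] sB; first by left.
have sB' : [set` s] `<=` B `|` \bigcup_(V in Ch) V.
  by move=> y ys; apply: sB; rewrite /= inE ys orbT.
have [Ba|[W ChW Wa]] := sB a (mem_head a s); have [sBs|[V ChV sBV]] := IH sB'.
- by left=> y; rewrite /= inE => /predU1P[->|/sBs].
- by right; exists V => // y; rewrite /= inE => /predU1P[->|/sBV]; [left|].
- by right; exists W => // y; rewrite /= inE => /predU1P[->|/sBs]; [right|left].
- have [VW|WV] := tot V W ChV ChW; [right; exists W|right; exists V] => // y;
  rewrite /= inE => /predU1P[->|/sBV[]]; by [right|left|right; apply: VW|right; apply: WV].
Qed.

Section MinimalMeetingClosedSet.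
Variables (X : topologicalType) (Fam : set (set X)) (U : set X).
Hypotheses (Fam_finite : forall G, Fam G -> finite_set G) (oU : open U)
  (Fam_notin : forall G, Fam G -> ~ G `<=` U).

Let avoiding (V : set X) := open V /\ forall G, Fam G -> ~ G `<=` U `|` V.

Let avoiding_chain (Ch : set (set X)) :
  Ch `<=` avoiding -> total_on Ch subset -> avoiding (\bigcup_(V in Ch) V).
Proof.
move=> Ch_av tot; split=> [|G FG GU]; first by apply: bigcup_open => V /Ch_av[].
have [GU'|[V /Ch_av[_ V_av] GUV]] := finite_sub_chain_cover tot (Fam_finite FG) GU.
- exact: Fam_notin FG GU'.
- exact: V_av FG GUV.
Qed.

Lemma exists_minimal_meeting_closed : exists K : set X,
  [/\ closed K, K `<=` ~` U, forall G, Fam G -> upset G `&` K !=set0 &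
      forall C, closed C -> C `<=` K -> (forall G, Fam G -> upset G `&` C !=set0) -> K `<=` C].
Proof.
have [A [[oA A_av] A_max]] := Zorn_bigcup avoiding_chain.
have meet G : Fam G -> G `&` ~` (U `|` A) !=set0.
  move=> FG; apply: contrapT => nGK; apply: (A_av G FG) => y Gy.
  by apply: contrapT => nUAy; apply: nGK; exists y.
exists (~` (U `|` A)); split.
- by rewrite closedC; apply: openU.
- by move=> y nUAy Uy; apply: nUAy; left.
- by move=> G /meet[y [Gy Ky]]; exists y; split => //; apply: sub_upset.
move=> C cC CK meetC y Ky; apply: contrapT => nCy.
have oAC : open (A `|` ~` C) by apply: openU => //; apply: closed_openC.
apply: (A_max (A `|` ~` C)).
  split=> [z Az|AAC]; first by left.
  by apply: Ky; right; apply: AAC; right.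
split=> [//|G FG GUAC].
have [z [Gz Cz]] := meetC G FG.
have [Uz|[Az|//]] := (upset_sub_open G (openU oU oAC)).2 GUAC z Gz; apply: (CK z Cz).
- by left.
- by right.
Qed.
End MinimalMeetingClosedSet.

Lemma GSI2_converges_in_irreducible (X : topologicalType) (D : set X) (x : X) :
  irreducible D -> delta D x ->
  exists (I : Type) (le : I -> I -> Prop) (net : I -> X),
    [/\ directed le, GSI2_converges le net x & forall i, D (net i)].
Proof.
move=> irrD xD; have [[d0 Dd0] _] := irrD.
pose J := {V : set X | open V /\ V `&` D !=set0}.
pose le (i j : J) := sval j `<=` sval i.
pose net (i : J) : X := sval (cid (proj2 (svalP i))).
have netP (i : J) : sval i (net i) /\ D (net i) by rewrite /net; case: cid.
exists J, le, net; split; last by move=> i; case: (netP i).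
- split=> [i|]; first exact: subset_refl.
  split=> [i j k ij jk|]; first exact: subset_trans jk ij.
  split; first by exists (exist _ setT (conj openT (ex_intro _ d0 (conj I Dd0)))).
  move=> [V [oV VD]] [W [oW WD]].
  exists (exist _ (V `&` W) (conj (openI oV oW) (irreducible_openI irrD oV oW VD WD))).
  by split=> y [].
exists [set [set d] | d in D]; split; [|split; [|split]].
- by move=> _ [d _ <-]; split; [apply: finite_set1|exists d].
- by rewrite image_comp; apply: PS_irreducible_upset1.
- move=> U oU [_ [d Dd <-]] /(upset_sub_open _ oU)/(_ d erefl) Ud.
  exists (exist _ U (conj oU (ex_intro _ d (conj Ud Dd)))) => i /(_ _ (netP i).1) //.
- move=> y Dy; rewrite upset1E; apply: xD => d Dd.
  by have := Dy _ (ex_intro2 _ _ d Dd erefl); rewrite upset1E.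
Qed.

Section Proposition.
Variables (X : topologicalType) (F : set X) (x : X).

Lemma llI2_eventually_in : llI2 F [set x] ->
  forall (I : Type) (le : I -> I -> Prop) (net : I -> X),
    directed le -> GSI2_converges le net x ->
    forall U : set X, open U -> F `<=` U -> eventually_in le net U.
Proof.
move=> Fx I le net _ [Fam [Fam_fin [irrFam [conv inter]]]] U oU FU.
apply: conv => //; apply: contrapT => notin.
have Fam_notin G : Fam G -> ~ G `<=` U.
  by move=> FG /(upset_sub_open G oU) GU; apply: notin; exists G.
have [K [cK KU meetK minK]] :=
  exists_minimal_meeting_closed (fun G FG => (Fam_fin G FG).1) oU Fam_notin.
have irrK : irreducible K.
  apply: (minimal_meeting_closed_irreducible irrFam cK); first by move=> _ [G /meetK ? <-].
  by move=> C cC CK meetC; apply: minK => // G FG; apply: meetC; exists G.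
have xK : delta K x.
  by apply/deltaP => u uK; apply: inter => G /meetK/ubounds_sub_upset; apply.
have [y [Fy]] := Fx K irrK (ex_intro _ x (conj xK erefl)).
by rewrite -(closure_id K).1 // => /KU; apply; apply: FU.
Qed.

Lemma eventually_in_llI2 :
  (forall (I : Type) (le : I -> I -> Prop) (net : I -> X),
     directed le -> GSI2_converges le net x ->
     forall U : set X, open U -> F `<=` U -> eventually_in le net U) ->
  llI2 F [set x].
Proof.
move=> conv D irrD [z [xD zx]]; rewrite zx in xD.
apply: contrapT => FD.
have [I [le [net [dir net_conv netD]]]] := GSI2_converges_in_irreducible irrD xD.
have oclD : open (~` closure D) by apply: closed_openC; apply: closed_closure.
have [|i0 /(_ i0 (proj1 dir i0))] := conv I le net dir net_conv _ oclD.
  by move=> y Fy Dy; apply: FD; exists y.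
by apply; apply: subset_closure.
Qed.

End Proposition.

Theorem proposition4p3 (X : topologicalType) (hT0 : kolmogorov_space X)
    (F : set X) (x : X) :
  llI2 F [set x] <->
  (forall (I : Type) (le : I -> I -> Prop) (net : I -> X),
     directed le -> GSI2_converges le net x ->
     forall U : set X, open U -> F `<=` U -> eventually_in le net U).
Proof. by split; [apply: llI2_eventually_in|apply: eventually_in_llI2]. Qed.
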